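(* Let $G$ be a finite group and $P$ a $p$-subgroup of $G$. Assume $P\le\ker(S(G,P))$ and that $N_G(P)$ is a $p$-group. If $S(N_G(P),P)$ is Brauer indecomposable, then $S(G,P)$ is Brauer indecomposable.
   Context: Throughout, $p$ is a prime and $k$ is an algebraically closed field of characteristic $p$; all modules are finite dimensional. For a $kG$-module $M$, $\ker(M)=\{g\in G: gm=m \text{ for all } m\in M\}$. For $H\le G$, $S(G,H)$ denotes the Scott module: the unique indecomposable direct summand of $\mathrm{Ind}_H^G(k)$ containing the trivial $kG$-module in its socle (equivalently, in its head). For a $kG$-module $M$ and a $p$-subgroup $Q\le G$, the Brauer construction is $M(Q)=M^Q/\sum_{R<Q}\mathrm{Tr}_R^Q(M^R)$, a $kN_G(Q)$-module. $M$ is Brauer indecomposable if for every $p$-subgroup $Q\le G$, $\mathrm{Res}^{N_G(Q)}_{QC_G(Q)} M(Q)$ is indecomposable or zero. *)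

From HB Require Import structures.
From mathcomp Require Import all_boot all_order all_algebra all_fingroup all_solvable all_character.
Set Implicit Arguments. Unset Strict Implicit. Unset Printing Implicit Defensive.
Import GRing.Theory.
Local Open Scope ring_scope.
Local Open Scope group_scope.

(* Modules are realised as submodules (row spaces) of the regular module kG0
   (right regular representation  regular_repr F G0 ). *)
Section Defs.
Variables (F : fieldType) (gT : finGroupType) (G0 : {group gT}).
Local Notation n := (gcard G0).
Local Notation rG := (regular_repr F G0).

Definition coset_vec (C : {set gT}) : 'rV[F]_n :=
  \sum_(y in C) delta_mx 0 (gring_index G0 y).

(* Ind_H^G0(k) = k[H\G0], the span of the coset sums of the right cosets of H *)
Definition ind_triv (H : {set gT}) : 'M[F]_n :=
  (\sum_(C in rcosets H G0) <<coset_vec C>>)%MS.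

(* The quotient W/T (T <= W, both K-stable) is indecomposable or zero as a
   kK-module: by the correspondence theorem, no decomposition
   W/T = A/T (+) B/T with A/T, B/T nonzero K-submodules. *)
Definition quot_indec_or_zero (K : {set gT}) (W T : 'M[F]_n) :=
  forall A B : 'M[F]_n,
    K \subset rstabs rG A -> K \subset rstabs rG B ->
    (T <= A)%MS -> (A <= W)%MS -> (T <= B)%MS -> (B <= W)%MS ->
    (A + B == W)%MS -> (A :&: B == T)%MS ->
    (A == T)%MS || (B == T)%MS.

Definition mx_indecomposable (U : 'M[F]_n) :=
  mxmodule rG U /\ U != 0 /\ quot_indec_or_zero G0 U 0.

Definition rel_trace (Q R : {set gT}) (W : 'M[F]_n) : 'M[F]_n :=
  W *m \sum_(C in rcosets R Q) rG (repr C).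

Definition fixed_pts (U : 'M[F]_n) (Q : {set gT}) : 'M[F]_n :=
  (U :&: rfix_mx rG Q)%MS.

Definition brauer_den (U : 'M[F]_n) (Q : {group gT}) : 'M[F]_n :=
  (\sum_(R : {group gT} | R \proper Q) rel_trace Q R (fixed_pts U R))%MS.

(* U(Q) = U^Q / sum_{R<Q} Tr_R^Q(U^R), restricted to Q C_G0(Q), is
   indecomposable or zero, for every p-subgroup Q of G0 *)
Definition brauer_indecomposable (p : nat) (U : 'M[F]_n) :=
  forall Q : {group gT}, Q \subset G0 -> p.-group Q ->
    quot_indec_or_zero (Q <*> 'C_G0(Q)) (fixed_pts U Q) (brauer_den U Q).

(* U is (a realisation of) the Scott module S(G0,H): an indecomposable direct
   summand of Ind_H^G0(k) whose socle contains the trivial module, i.e. which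
   contains a nonzero G0-fixed vector. *)
Definition is_scott_module (H : {set gT}) (U : 'M[F]_n) :=
  [/\ mx_indecomposable U,
      (exists2 V : 'M[F]_n, mxmodule rG V &
        (U + V == ind_triv H)%MS && mxdirect (U + V)) &
      (fixed_pts U G0 != 0) ].

End Defs.

Arguments is_scott_module {F gT} G0 H U.
Arguments brauer_indecomposable {F gT} G0 p U.
Arguments mx_indecomposable {F gT} G0 U.
Arguments ind_triv {F gT} G0 H.

From mathcomp Require Import all_boot all_order all_algebra all_fingroup all_solvable all_character.
Set Implicit Arguments. Unset Strict Implicit. Unset Printing Implicit Defensive.
Import GRing.Theory.
Local Open Scope ring_scope.
Local Open Scope group_scope.

(* Let N be the kernel of S. The relative trace from P to G sends the coset sum of
   P, which lies in Ind_P^G(k) = S + V, to the G-fixed vector sum_(g in G) g of S;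
   if p divided |N : P| the trace would kill S and put that vector in V. So P is
   Sylow in N, and the Frattini argument gives G = N N_G(P). For the p-group
   N_G(P) the Scott module is all of k[N_G(P)/P], whose Brauer quotient at P
   splits along the cosets of P C(P); its Brauer indecomposability thus forces
   N_G(P) = P C_G(P), whence G = N C_G(Q) N for every p-subgroup Q of N. For such
   Q the Brauer quotient S(Q) is S itself and every Q C_G(Q)-submodule of S is a
   G-submodule. For Q not contained in N, Higman's criterion relative to
   Q :&: N shows S(Q) = 0. *)

Section CosetRepresentatives.
Variable gT : finGroupType.
Implicit Types H K : {group gT}.

Lemma mem_repr_rcosets H K C : H \subset K -> C \in rcosets H K -> repr C \in K.
Proof.
move=> sHK /rcosetsP[x Kx ->]; have /rcosetP[h Hh ->] := mem_repr_rcoset H x.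
by rewrite groupM // (subsetP sHK).
Qed.

Lemma rcoset_repr_rcosets H (A : {set gT}) C : C \in rcosets H A -> H :* repr C = C.
Proof. by case/rcosetsP=> x _ ->; rewrite rcoset_repr. Qed.

Lemma rcosetC (A : {set gT}) x : (~: A) :* x = ~: (A :* x).
Proof. by apply/setP=> y; rewrite mem_rcoset !inE mem_rcoset. Qed.

End CosetRepresentatives.

Lemma dvdn_indexg_proper (p : nat) (gT : finGroupType) (Q R : {group gT}) :
  p.-group Q -> R \proper Q -> (p %| #|Q : R|)%N.
Proof.
move=> pQ /andP[sRQ nQR].
have pn : p.-nat #|Q : R| := pnat_dvd (dvdn_indexg Q R) pQ.
have : (1 < #|Q : R|)%N by rewrite indexg_gt1.
by case: (p_natP pn) => [[|k] ->]; rewrite ?expn0 // expnS dvdn_mulr.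
Qed.

(* With the Frattini argument, G = N N_G(P) = N P C_G(P), and conjugating Q
   into P by an element of N turns C_G(P) into a subgroup of C_G(Q). *)
Lemma Frattini_cent_decomposition (p : nat) (gT : finGroupType) (G N P Q : {group gT}) :
  N <| G -> p.-Sylow(N) P -> 'N_G(P) \subset P <*> 'C_G(P) ->
  Q \subset N -> p.-group Q -> G \subset N * 'C_G(Q) * N.
Proof.
move=> nsNG sylP sNPC sQN pQ; apply/subsetP=> g.
have [x Nx sQxP] := Sylow_Jsub sylP sQN pQ.
have nPC : 'C_G(P) \subset 'N(P) by rewrite subIset // cent_sub orbT.
rewrite -{1}(Frattini_arg nsNG sylP) => /mulsgP[m h Nm /(subsetP sNPC) NPCh ->].
move: NPCh; rewrite norm_joinEr // => /mulsgP[a c Pa /setIP[Gc cPc] ->].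
have : c \in 'C(Q :^ x) := subsetP (centS sQxP) c cPc.
rewrite centJ mem_conjg => cQc.
have Gx := subsetP (normal_sub nsNG) x Nx.
have -> : m * (a * c) = (m * a * x^-1) * c ^ x^-1 * x.
  by rewrite conjgE invgK !mulgA !mulgVK.
have Nmax : m * a * x^-1 \in N by rewrite !groupM ?groupV // (subsetP (pHall_sub sylP)).
have CQcx : c ^ x^-1 \in 'C_G(Q) by rewrite inE cQc groupJ ?groupV.
by apply: mem_mulg; first exact: mem_mulg.
Qed.

Section RegularModule.
Variables (F : fieldType) (gT : finGroupType) (G : {group gT}).
Local Notation n := (gcard G).
Local Notation rG := (regular_repr F G).
Implicit Types (H K N P Q R : {group gT}) (w : 'rV[F]_n).

Definition gring_vec (y : gT) : 'rV[F]_n := delta_mx 0 (gring_index G y).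

Definition gring_coef w (y : gT) : F := w 0 (gring_index G y).

Definition supp_proj (Z : {set gT}) : 'M[F]_n :=
  diag_mx (\row_i (enum_val i \in Z)%:R).

Definition rel_trace_mx (H K : {set gT}) : 'M[F]_n :=
  \sum_(C in rcosets H K) rG (repr C).

Local Notation gsum := (coset_vec F G G).

Lemma gring_vecM x y : x \in G -> y \in G -> gring_vec y *m rG x = gring_vec (y * x).
Proof. by move=> Gx Gy; rewrite /gring_vec -rowE rowK gring_indexK. Qed.

Lemma gring_vec_mxP m (A B : 'M[F]_(n, m)) :
  (forall y, y \in G -> gring_vec y *m A = gring_vec y *m B) -> A = B.
Proof.
move=> eqAB; apply/row_matrixP=> i; rewrite !rowE.
by have := eqAB (enum_val i) (enum_valP i); rewrite /gring_vec gring_valK.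
Qed.

Lemma gring_vec_expand w : w = (\sum_(y in G) gring_coef w y *: gring_vec y)%R.
Proof.
rewrite big_enum_val {1}[w]row_sum_delta /=.
by apply: eq_bigr => i _; rewrite /gring_coef /gring_vec gring_valK.
Qed.

Lemma gring_coef_vec y z : y \in G -> z \in G -> gring_coef (gring_vec z) y = (z == y)%:R.
Proof.
move=> Gy Gz; rewrite /gring_coef /gring_vec mxE /=.
by rewrite (inj_in_eq (can_in_inj (@gring_indexK _ G))) // eq_sym.
Qed.

Lemma gring_coefM w x y : x \in G -> y \in G ->
  gring_coef (w *m rG x) y = gring_coef w (y * x^-1).
Proof.
move=> Gx Gy; rewrite {1}[w]gring_vec_expand mulmx_suml /gring_coef summxE.
have Gyx : y * x^-1 \in G by rewrite groupM ?groupV.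
rewrite (bigD1 (y * x^-1)) //= big1 => [|z /andP[Gz nz]].
  rewrite -scalemxAl gring_vecM // mulgKV mxE -/(gring_coef _ y).
  by rewrite gring_coef_vec // eqxx mulr1 addr0.
rewrite -scalemxAl gring_vecM // mxE -/(gring_coef _ y) gring_coef_vec ?groupM //.
by rewrite (canF_eq (mulgK x)) (negbTE nz) mulr0.
Qed.

Lemma gring_coef_rfix H w x y : H \subset G -> (w <= rfix_mx rG H)%MS ->
  x \in H -> y \in G -> gring_coef w (y * x) = gring_coef w y.
Proof.
move=> sHG /rfix_mxP fixw Hx Gy; have Gx := subsetP sHG x Hx.
by rewrite -{2}(fixw x^-1 (groupVr Hx)) gring_coefM ?groupV // invgK.
Qed.

Lemma gring_vec_supp_proj (Z : {set gT}) y : y \in G ->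
  gring_vec y *m supp_proj Z = ((y \in Z)%:R *: gring_vec y)%R.
Proof. by move=> Gy; rewrite /gring_vec -rowE row_diag_mx mxE gring_indexK. Qed.

Lemma supp_proj_rcoset (Z : {set gT}) x : x \in G ->
  supp_proj Z *m rG x = rG x *m supp_proj (Z :* x).
Proof.
move=> Gx; apply: gring_vec_mxP => y Gy.
rewrite !mulmxA gring_vec_supp_proj // -scalemxAl gring_vecM //.
by rewrite gring_vec_supp_proj ?groupM // mem_rcoset mulgK.
Qed.

Lemma supp_projC (Z : {set gT}) : (supp_proj Z + supp_proj (~: Z))%R = 1%:M.
Proof.
apply: gring_vec_mxP => y Gy; rewrite mulmxDr !gring_vec_supp_proj // mulmx1 inE.
by case: (y \in Z); rewrite ?scale1r ?scale0r ?addr0 ?add0r.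
Qed.

Lemma supp_projM (Z Z' : {set gT}) : supp_proj Z *m supp_proj Z' = supp_proj (Z :&: Z').
Proof.
apply: gring_vec_mxP => y Gy; rewrite mulmxA !gring_vec_supp_proj // -scalemxAl.
rewrite gring_vec_supp_proj // scalerA inE.
by case: (y \in Z); case: (y \in Z'); rewrite ?mulr1 ?mulr0.
Qed.

Lemma supp_proj0 : supp_proj set0 = 0.
Proof.
by apply: gring_vec_mxP => y Gy; rewrite gring_vec_supp_proj // inE scale0r mulmx0.
Qed.

Lemma capmx_supp_projC m1 m2 (M1 : 'M[F]_(m1, n)) (M2 : 'M[F]_(m2, n)) Z :
  (M1 *m supp_proj Z :&: M2 *m supp_proj (~: Z) = 0)%MS.
Proof.
apply/eqP/rowV0P=> v; rewrite sub_capmx => /andP[/submxP[u1 ->] /submxP[u2 e2]].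
have -> : u1 *m (M1 *m supp_proj Z) = u1 *m (M1 *m supp_proj Z) *m supp_proj Z.
  by rewrite -!mulmxA supp_projM setIid.
by rewrite {1}[u1 *m _]e2 -!mulmxA supp_projM setIC setICr supp_proj0 !mulmx0.
Qed.

Lemma coset_vecM (C : {set gT}) x : C \subset G -> x \in G ->
  coset_vec F G C *m rG x = coset_vec F G (C :* x).
Proof.
move=> sCG Gx; rewrite /coset_vec mulmx_suml -rcosetE /rcoset big_imset /=.
  by apply: eq_bigr => y Cy; rewrite gring_vecM // (subsetP sCG).
by move=> y z _ _; apply: mulIg.
Qed.

Lemma coset_vec_neq0 (C : {set gT}) : C \subset G -> C != set0 -> coset_vec F G C != 0.
Proof.
move=> sCG /set0Pn[y Cy]; have Gy := subsetP sCG y Cy.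
apply: contraNneq (oner_neq0 F) => C0.
have := congr1 (gring_coef^~ y) C0; rewrite /gring_coef mxE summxE => <-.
rewrite (bigD1 y) //= big1 => [|z /andP[Cz nz]].
  by rewrite -/(gring_coef _ y) gring_coef_vec // eqxx addr0.
by rewrite -/(gring_coef _ y) gring_coef_vec ?(subsetP sCG) // (negbTE nz).
Qed.

Lemma coset_vec_rcosets H K : H \subset K ->
  (\sum_(C in rcosets H K) coset_vec F G C)%R = coset_vec F G K.
Proof.
move=> sHK; have [/eqP covHK trivHK _] := and3P (rcosets_partition sHK).
by rewrite /coset_vec -big_trivIset // covHK.
Qed.

Lemma coset_vec_supp_proj (C Z : {set gT}) : C \subset G -> C \subset Z ->
  coset_vec F G C *m supp_proj Z = coset_vec F G C.
Proof.
move=> sCG sCZ; rewrite /coset_vec mulmx_suml; apply: eq_bigr => y Cy.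
by rewrite gring_vec_supp_proj ?(subsetP sCG) // (subsetP sCZ) // scale1r.
Qed.

Lemma gsum_neq0 : gsum != 0.
Proof. by apply: coset_vec_neq0 => //; apply/set0Pn; exists 1%g. Qed.

Lemma rfix_regular_gsum w : (w <= rfix_mx rG G)%MS ->
  w = (gring_coef w 1 *: gsum)%R.
Proof.
move=> fixw; rewrite {1}[w]gring_vec_expand /coset_vec scaler_sumr.
by apply: eq_bigr => y Gy; rewrite -{1}[y]mul1g (gring_coef_rfix (subxx G) fixw).
Qed.

Lemma gsum_sub_rfix m (M : 'M[F]_(m, n)) : (M <= rfix_mx rG G)%MS -> M != 0 ->
  (gsum <= M)%MS.
Proof.
move=> sMfix /rowV0Pn[v svM nzv].
have defv := rfix_regular_gsum (submx_trans svM sMfix).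
have nzc : gring_coef v 1 != 0.
  by apply: contraNneq nzv => c0; rewrite defv c0 scale0r.
have -> : gsum = ((gring_coef v 1)^-1 *: v)%R by rewrite {2}defv scalerA mulVf ?scale1r.
by rewrite scalemx_sub.
Qed.

Lemma gsum_sub_fixed_pts (U : 'M[F]_n) : fixed_pts U G != 0 -> (gsum <= U)%MS.
Proof. by move/(gsum_sub_rfix (capmxSr _ _))/submx_trans; apply; apply: capmxSl. Qed.

Lemma coset_vec_sub_ind_triv H (C : {set gT}) : C \in rcosets H G ->
  (coset_vec F G C <= ind_triv G H)%MS.
Proof. by move=> HC; apply: (sumsmx_sup C) => //; rewrite genmxE. Qed.

Lemma ind_triv_sub_rfix H : H \subset G -> G \subset 'N(H) ->
  (ind_triv G H <= rfix_mx rG H)%MS.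
Proof.
move=> sHG nHG; apply/sumsmx_subP=> C /rcosetsP[x Gx ->]; rewrite genmxE.
apply/rfix_mxP=> h Hh; have Gh := subsetP sHG h Hh.
rewrite coset_vecM ?groupM ?mul_subG ?sub1set // -rcosetM.
have -> : x * h = (h ^ x^-1) * x by rewrite conjgE invgK mulgA mulgVK.
by rewrite rcosetM rcoset_id // memJ_norm ?groupV ?(subsetP nHG).
Qed.

(* A vector fixed by N <| G is constant on the cosets of N, hence on those of H. *)
Lemma rfix_sub_ind_triv H N : H \subset N -> N <| G ->
  (rfix_mx rG N <= ind_triv G H)%MS.
Proof.
move=> sHN /andP[sNG nNG]; apply/rV_subP=> w fixw.
have sHG := subset_trans sHN sNG.
have coef_rcoset x y : x \in G -> y \in H :* x -> gring_coef w y = gring_coef w x.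
  move=> Gx /rcosetP[h Hh ->]; have -> : h * x = x * (h ^ x) by rewrite mulKVg.
  by rewrite (gring_coef_rfix sNG fixw) // memJ_norm ?(subsetP nNG) ?(subsetP sHN).
have [/eqP covHG trivHG _] := and3P (rcosets_partition sHG).
rewrite [w]gring_vec_expand -{1}covHG big_trivIset //.
apply: summx_sub => C /rcosetsP[x Gx ->].
rewrite (eq_bigr (fun y => gring_coef w x *: gring_vec y)%R); last first.
  by move=> y Hxy; rewrite (coef_rcoset x y).
by rewrite -scaler_sumr scalemx_sub // coset_vec_sub_ind_triv ?mem_rcosets ?mulSGid.
Qed.

Lemma rel_trace_mx_rfix H K m (W : 'M[F]_(m, n)) : H \subset K -> K \subset G ->
  (W <= rfix_mx rG K)%MS -> W *m rel_trace_mx H K = (#|K : H|%:R *: W)%R.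
Proof.
move=> sHK sKG /rfix_mxP fixW; rewrite mulmx_sumr.
rewrite (eq_bigr (fun=> W)) => [|C HC]; last exact/fixW/(mem_repr_rcosets sHK).
by rewrite sumr_const scaler_nat.
Qed.

Lemma rel_trace_mx_module H K m (V : 'M[F]_n) (W : 'M[F]_(m, n)) :
  H \subset K -> K \subset G -> mxmodule rG V -> (W <= V)%MS ->
  (W *m rel_trace_mx H K <= V)%MS.
Proof.
move=> sHK sKG modV sWV; rewrite mulmx_sumr; apply: summx_sub => C HC.
have GrC := subsetP sKG _ (mem_repr_rcosets sHK HC).
by apply: submx_trans (mxmoduleP modV _ GrC); rewrite submxMr.
Qed.

Lemma coset_vec_rel_trace H K : H \subset K -> K \subset G ->
  coset_vec F G H *m rel_trace_mx H K = coset_vec F G K.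
Proof.
move=> sHK sKG; rewrite mulmx_sumr -(coset_vec_rcosets sHK); apply: eq_bigr => C HC.
have KrC := mem_repr_rcosets sHK HC.
by rewrite coset_vecM ?(rcoset_repr_rcosets HC) ?(subset_trans sHK sKG) ?(subsetP sKG).
Qed.

Lemma quot_indec_or_zero_eqmx (K : {set gT}) (W W' T T' : 'M[F]_n) :
  (W :=: W')%MS -> (T :=: T')%MS ->
  quot_indec_or_zero K W T -> quot_indec_or_zero K W' T'.
Proof. by move=> eqW eqT indW A B; rewrite -!eqW -!eqT; apply: indW. Qed.

Lemma quot_indec_or_zero_sub (K : {set gT}) (W T : 'M[F]_n) :
  (W <= T)%MS -> quot_indec_or_zero K W T.
Proof. by move=> sWT A B _ _ sTA sAW; rewrite /= sTA (submx_trans sAW sWT). Qed.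

Section PrimeCharacteristic.
Variable p : nat.
Hypothesis pcharFp : p \in [pchar F]%R.

Lemma rel_trace_proper_pgroup_eq0 Q R m (W : 'M[F]_(m, n)) :
  Q \subset G -> p.-group Q -> R \proper Q -> (W <= rfix_mx rG Q)%MS ->
  W *m rel_trace_mx R Q = 0.
Proof.
move=> sQG pQ ltRQ fixW; rewrite rel_trace_mx_rfix ?(proper_sub ltRQ) //.
move/(dvdn_indexg_proper pQ): ltRQ.
by rewrite (dvdn_pcharf pcharFp) => /eqP->; rewrite scale0r.
Qed.

Lemma brauer_den_rfix_eq0 Q (S : 'M[F]_n) :
  Q \subset G -> p.-group Q -> (S <= rfix_mx rG Q)%MS ->
  (brauer_den S Q :=: (0 : 'M[F]_n))%MS.
Proof.
move=> sQG pQ fixS; apply/eqmxP; rewrite sub0mx andbT.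
apply/sumsmx_subP=> R ltRQ; rewrite /rel_trace rel_trace_proper_pgroup_eq0 //.
exact: submx_trans (capmxSl _ _) fixS.
Qed.

Lemma brauer_quot_rfix K Q (S : 'M[F]_n) :
  Q \subset G -> p.-group Q -> (S <= rfix_mx rG Q)%MS ->
  quot_indec_or_zero K (fixed_pts S Q) (brauer_den S Q) <-> quot_indec_or_zero K S 0.
Proof.
move=> sQG pQ fixS; have eqS : (fixed_pts S Q :=: S)%MS by apply/capmx_idPl.
have eqT := brauer_den_rfix_eq0 sQG pQ fixS.
split; first exact: quot_indec_or_zero_eqmx.
by apply: quot_indec_or_zero_eqmx; apply: eqmx_sym.
Qed.

End PrimeCharacteristic.

Lemma rfix_supp_proj H (Z : {set gT}) m (W : 'M[F]_(m, n)) :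
  H \subset G -> {in H, forall h, Z :* h = Z} ->
  (W <= rfix_mx rG H)%MS -> (W *m supp_proj Z <= rfix_mx rG H)%MS.
Proof.
move=> sHG stZ /rfix_mxP fixW; apply/rfix_mxP=> h Hh.
by rewrite -mulmxA supp_proj_rcoset ?(subsetP sHG) // stZ // mulmxA fixW.
Qed.

Lemma rstabs_supp_proj (K Z : {set gT}) (W : 'M[F]_n) :
  {in K, forall k, Z :* k = Z} -> K \subset rstabs rG W ->
  K \subset rstabs rG (W *m supp_proj Z).
Proof.
move=> stZ stW; apply/subsetP=> k Kk; have /setIdP[Gk sWk] := subsetP stW k Kk.
by rewrite inE Gk -mulmxA supp_proj_rcoset // stZ // mulmxA submxMr.
Qed.

Lemma quot_indec_supp_proj (K Z : {set gT}) (W : 'M[F]_n) :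
  {in K, forall k, Z :* k = Z} -> K \subset rstabs rG W ->
  (W *m supp_proj Z <= W)%MS -> quot_indec_or_zero K W 0 ->
  (W *m supp_proj Z == 0) || (W *m supp_proj (~: Z) == 0).
Proof.
move=> stZ stW sWZ indW.
have defW : W = (W *m supp_proj Z + W *m supp_proj (~: Z))%R.
  by rewrite -mulmxDr supp_projC mulmx1.
have sWZ' : (W *m supp_proj (~: Z) <= W)%MS.
  have -> : W *m supp_proj (~: Z) = (W - W *m supp_proj Z)%R.
    by rewrite {2}defW addrAC subrr add0r.
  by rewrite addmx_sub ?eqmx_opp.
have stZ' : {in K, forall k, (~: Z) :* k = ~: Z} by move=> k Kk; rewrite rcosetC stZ.
have := indW (W *m supp_proj Z) (W *m supp_proj (~: Z)).
rewrite capmx_supp_projC !sub0mx !andbT -!submx0; apply; rewrite ?rstabs_supp_proj //.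
by rewrite addsmx_sub sWZ sWZ' {1}defW addmx_sub_adds.
Qed.

(* X picks, in each coset y(N <*> Q), the N-coset of a fixed representative t;
   as c runs over representatives of (Q :&: N)\Q, the sets X c partition G
   because y lies in t N q for a unique coset (Q :&: N) q. *)
Lemma supp_proj_rcosets_partition N Q :
  N \subset G -> Q \subset G -> Q \subset 'N(N) ->
  exists2 X : {set gT}, {in N, forall k, X :* k = X} &
    (\sum_(C in rcosets (Q :&: N) Q) supp_proj (X :* repr C))%R = 1%:M.
Proof.
move=> sNG sQG nNQ; pose L := (N <*> Q)%G.
have LM y k : k \in L -> (y * k) *: L = y *: L.
  by move=> Lk; rewrite lcosetM lcoset_id.
pose X := [set g in G | g \in repr (g *: L) *: N].
have memX y c : y \in G -> c \in Q -> (y \in X :* c) = (y * c^-1 \in repr (y *: L) *: N).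
  move=> Gy Qc; have Lc : c^-1 \in L by rewrite groupV (subsetP (joing_subr _ _)).
  have Gc := subsetP sQG c Qc.
  by rewrite mem_rcoset inE groupM ?groupV //= (LM _ _ Lc).
exists X.
  move=> k Nk; apply/setP=> y; have Lk : k^-1 \in L by rewrite groupV (subsetP (joing_subl _ _)).
  rewrite mem_rcoset !inE (LM _ _ Lk) !mem_lcoset mulgA.
  by rewrite !(groupMr _ (groupVr _)) ?(subsetP sNG k Nk).
apply: gring_vec_mxP => y Gy; rewrite mulmx_sumr mulmx1.
rewrite (eq_bigr (fun C => (y \in X :* repr C)%:R *: gring_vec y)%R); last first.
  by move=> C _; rewrite gring_vec_supp_proj.
rewrite -scaler_suml; set t := repr (y *: L).
have : y \in t *: L by rewrite (lcoset_eqP (mem_repr _ (lcoset_refl L y))) lcoset_refl.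
rewrite mem_lcoset /= norm_joinEr // => /mulsgP[m q Nm Qq deft].
have memXt c : c \in Q -> (y \in X :* c) = (q * c^-1 \in N).
  by move=> Qc; rewrite memX // mem_lcoset mulgA deft -mulgA (groupMl _ Nm).
have sRQ : Q :&: N \subset Q := subsetIl _ _.
have Rq : (Q :&: N) :* q \in rcosets (Q :&: N) Q by rewrite mem_rcosets mulSGid.
rewrite (bigD1 _ Rq) big1 /= => [|C /andP[RC neC]].
  rewrite memXt ?(mem_repr_rcosets sRQ Rq) //.
  have /rcosetP[r /setIP[_ Nr] ->] := mem_repr_rcoset (Q :&: N) q.
  by rewrite invMg mulKVg groupV Nr addr0 scale1r.
rewrite memXt ?(mem_repr_rcosets sRQ RC) //.
have [Nqc|//] := boolP (q * (repr C)^-1 \in N); case/eqP: neC.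
rewrite -(rcoset_repr_rcosets RC); apply/rcoset_eqP.
by rewrite mem_rcoset inE groupM ?groupV ?(mem_repr_rcosets sRQ RC) //= -groupV invMg invgK.
Qed.

Section ScottModule.
Variables (p : nat) (P : {group gT}) (S V : 'M[F]_n).
Hypothesis pcharFp : p \in [pchar F]%R.
Hypotheses (modS : mxmodule rG S) (modV : mxmodule rG V).
Hypotheses (defSV : (S + V == ind_triv G P)%MS) (dxSV : mxdirect (S + V)).
Hypothesis gsumS : (gsum <= S)%MS.

Lemma scott_complement_gsum : ~~ (gsum <= V)%MS.
Proof.
apply: contraNN gsum_neq0 => gsumV; have /mxdirect_addsP capSV := dxSV.
by rewrite -submx0 -capSV sub_capmx gsumS.
Qed.

(* The trace from P to G maps the coset vector of P to the G-sum; if it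
   factors through a subgroup N acting trivially on S with p | |N : P|,
   it kills S, so the G-sum would lie in V. *)
Lemma scott_kernel_p'index N : P \subset N -> N \subset G ->
  (S <= rfix_mx rG N)%MS -> ~~ (p %| #|N : P|)%N.
Proof.
move=> sPN sNG fixS; apply: contraNN scott_complement_gsum => p_dv_NP.
have /sub_addsmxP[[u v] /= defP] : (coset_vec F G P <= S + V)%MS.
  rewrite (eqmxP defSV) coset_vec_sub_ind_triv //.
  by apply/rcosetsP; exists 1%g; rewrite ?mulg1.
have uS0 : u *m S *m rel_trace_mx P N = 0.
  rewrite rel_trace_mx_rfix ?(submx_trans (submxMl u S)) //.
  by move: p_dv_NP; rewrite (dvdn_pcharf pcharFp) => /eqP->; rewrite scale0r.
rewrite -(coset_vec_rel_trace sNG (subxx G)) -(coset_vec_rel_trace sPN sNG).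
rewrite defP mulmxDl uS0 add0r.
by do 2!apply: rel_trace_mx_module => //; rewrite ?submxMl.
Qed.

Lemma scott_pgroup_ind_triv : p.-group G -> (S :=: ind_triv G P)%MS.
Proof.
move=> pG; suff V0 : V = 0.
  by apply: eqmx_trans (eqmxP defSV) => //; rewrite V0; apply: eqmx_sym; apply: addsmx0.
apply/eqP; apply: contraNT scott_complement_gsum => nzV.
have := rfix_pgroup_pchar pcharFp (submod_repr modV) _ pG (subxx G).
rewrite lt0n mxrank_eq0 => /(_ nzV).
rewrite -mxrank_eq0 (rfix_submod modV (subxx G)) mxrank_eq0 -val_submod_eq0.
by rewrite in_submodK ?capmxSl //; apply: gsum_sub_fixed_pts.
Qed.

(* Higman's criterion for R = Q :&: N < Q: a vector w of S^Q is the trace from R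
   to Q of its projection onto the set X of supp_proj_rcosets_partition. That
   projection is N-fixed, hence lies in Ind_P^G(k) = S + V, and the trace of its
   V-component lies in S :&: V = 0. *)
Lemma scott_brauer_quot_outside_kernel N Q : P \subset N -> N <| G ->
  (S <= rfix_mx rG N)%MS -> Q \subset G -> ~~ (Q \subset N) ->
  (fixed_pts S Q <= brauer_den S Q)%MS.
Proof.
move=> sPN nsNG fixS sQG not_sQN; have /andP[sNG nNG] := nsNG.
pose R := (Q :&: N)%G; have sRQ : R \subset Q := subsetIl _ _.
have ltRQ : R \proper Q by rewrite /proper sRQ subsetI subxx.
apply: submx_trans (sumsmx_sup R ltRQ (submx_refl _)); rewrite /rel_trace.
have eqSR : (fixed_pts S R :=: S)%MS.
  by apply/capmx_idPl; apply: submx_trans fixS (rfix_mxS _ (subsetIr _ _)).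
rewrite (eqmxMr _ eqSR); apply/rV_subP=> w; rewrite sub_capmx => /andP[Sw fixw].
have [X stX sumX] := supp_proj_rcosets_partition sNG sQG (subset_trans sQG nNG).
have defw : w = w *m supp_proj X *m rel_trace_mx R Q.
  rewrite mulmx_sumr -{1}[w]mulmx1 -sumX mulmx_sumr; apply: eq_bigr => C RC.
  have QrC := mem_repr_rcosets sRQ RC.
  by rewrite -mulmxA supp_proj_rcoset ?(subsetP sQG) // mulmxA (rfix_mxP _ fixw).
have /sub_addsmxP[[u v] /= defwX] : (w *m supp_proj X <= S + V)%MS.
  rewrite (eqmxP defSV); apply: submx_trans (rfix_sub_ind_triv sPN nsNG).
  exact: rfix_supp_proj stX (submx_trans Sw fixS).
have trS : (u *m S *m rel_trace_mx R Q <= S)%MS.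
  by apply: rel_trace_mx_module; rewrite ?submxMl.
have trV : (v *m V *m rel_trace_mx R Q <= V)%MS.
  by apply: rel_trace_mx_module; rewrite ?submxMl.
have vV0 : v *m V *m rel_trace_mx R Q = 0.
  have /mxdirect_addsP capSV := dxSV.
  apply/eqP; rewrite -submx0 -capSV sub_capmx trV andbT.
  have -> : v *m V *m rel_trace_mx R Q = (w - u *m S *m rel_trace_mx R Q)%R.
    by rewrite {1}defw defwX mulmxDl addrC addKr.
  by rewrite addmx_sub ?eqmx_opp.
by rewrite defw defwX mulmxDl vV0 addr0 -mulmxA submxMl.
Qed.

End ScottModule.

(* Here S = Ind_P^G(k) = rfix P, and for h outside K = P C_G(P) projecting onto
   the elements in and out of K splits it into two nonzero K-submodules. *)
Lemma scott_pgroup_normal_cent p P (S : 'M[F]_n) :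
  p \in [pchar F]%R -> P <| G -> p.-group G ->
  is_scott_module G P S -> brauer_indecomposable G p S -> G \subset P <*> 'C_G(P).
Proof.
move=> pcharFp nsPG pG [_ [V modV /andP[defSV dxSV]] fixS] indS.
have /andP[sPG nPG] := nsPG; have pP := pgroupS sPG pG.
pose K := P <*> 'C_G(P); have sPK : P \subset K := joing_subl _ _.
have sKG : K \subset G by rewrite join_subG sPG subsetIl.
have eqS : (S :=: rfix_mx rG P)%MS.
  have gsumS := gsum_sub_fixed_pts fixS.
  apply: eqmx_trans (scott_pgroup_ind_triv pcharFp modV defSV dxSV gsumS pG) _.
  by apply/eqmxP; rewrite ind_triv_sub_rfix ?rfix_sub_ind_triv.
have indP : quot_indec_or_zero K (rfix_mx rG P) 0.
  apply: (quot_indec_or_zero_eqmx eqS (eqmx_refl _)).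
  have fixSP : (S <= rfix_mx rG P)%MS by rewrite eqS.
  by apply/(brauer_quot_rfix pcharFp K sPG pP fixSP); apply: indS.
have stK : {in K, forall k, K :* k = K} by move=> k; apply: rcoset_id.
have stW : K \subset rstabs rG (rfix_mx rG P).
  exact: subset_trans sKG (normal_rfix_mx_module _ nsPG).
have sWK : (rfix_mx rG P *m supp_proj K <= rfix_mx rG P)%MS.
  by apply: rfix_supp_proj => // q Pq; apply: stK (subsetP sPK q Pq).
have proj_neq0 x (Z : {set gT}) : x \in G -> P :* x \subset Z ->
    (rfix_mx rG P *m supp_proj Z == 0) = false.
  move=> Gx sPxZ; have sPxG : P :* x \subset G by rewrite mul_subG ?sub1set.
  apply/negbTE/(contraNneq _ (coset_vec_neq0 sPxG _)); last first.
    by apply/set0Pn; exists x; apply: rcoset_refl.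
  move=> W0; rewrite -(coset_vec_supp_proj sPxG sPxZ) -submx0 -W0 submxMr //.
  apply: submx_trans (ind_triv_sub_rfix sPG nPG).
  by rewrite coset_vec_sub_ind_triv ?mem_rcosets ?mulSGid.
apply/subsetP=> h Gh; apply/idPn=> notKh.
have := quot_indec_supp_proj stK stW sWK indP.
rewrite (proj_neq0 1%g) ?(proj_neq0 h) ?rcoset1 //.
apply/subsetP=> _ /rcosetP[q Pq ->]; rewrite inE; apply: contra notKh => Kqh.
by rewrite -(groupMl _ (subsetP sPK q Pq)).
Qed.

Lemma brauer_quot_indec_in_kernel p N Q (S : 'M[F]_n) :
  p \in [pchar F]%R -> Q \subset N -> N \subset G -> (S <= rfix_mx rG N)%MS ->
  p.-group Q -> mx_indecomposable G S -> G \subset N * 'C_G(Q) * N ->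
  quot_indec_or_zero (Q <*> 'C_G(Q)) (fixed_pts S Q) (brauer_den S Q).
Proof.
move=> pcharFp sQN sNG fixS pQ [_ [_ indS]] sG_NCN; have sQG := subset_trans sQN sNG.
apply/(brauer_quot_rfix pcharFp _ sQG pQ (submx_trans fixS (rfix_mxS _ sQN))).
have stabG X : (X <= S)%MS -> Q <*> 'C_G(Q) \subset rstabs rG X -> G \subset rstabs rG X.
  move=> sXS stX; apply: subset_trans sG_NCN _.
  have sNX : N \subset rstabs rG X.
    apply/subsetP=> x Nx; rewrite inE (subsetP sNG) //=.
    by rewrite (rfix_mxP _ (submx_trans sXS fixS)) ?submx_refl.
  by rewrite !mul_subG // (subset_trans (joing_subr _ _) stX).
by move=> A B stA stB _ sAS _ sBS; apply: indS; rewrite ?sub0mx ?stabG.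
Qed.

End RegularModule.

Theorem theorem1p4 (k : closedFieldType) (p : nat) (gT : finGroupType)
    (G P : {group gT}) :
  (p \in [pchar k])%R ->
  P \subset G -> p.-group P ->
  p.-group 'N_G(P) ->
  forall S : 'M[k]_(gcard G),
    is_scott_module G P S ->
    P \subset rstab (regular_repr k G) S ->
    (exists2 S' : 'M[k]_(gcard 'N_G(P)),
        is_scott_module 'N_G(P) P S' & brauer_indecomposable 'N_G(P) p S') ->
    brauer_indecomposable G p S.
Proof.
move=> pcharFp sPG pP pNP S [indS [V modV /andP[defSV dxSV]] fixS] sPN [S' scS' biS'].
have modS := indS.1; pose N := rstab_group (regular_repr k G) S.
have nsNG : N <| G := rstab_normal modS.
have fixNS : (S <= rfix_mx (regular_repr k G) N)%MS by rewrite -rfix_mx_rstabC ?rstab_sub.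
have gsumS := gsum_sub_fixed_pts fixS.
have sylP : p.-Sylow(N) P.
  rewrite /pHall sPN pP p'natE ?(pcharf_prime pcharFp) //.
  exact: scott_kernel_p'index pcharFp modV defSV dxSV gsumS _ sPN (normal_sub nsNG) fixNS.
have sNPC : 'N_G(P) \subset P <*> 'C_G(P).
  have := scott_pgroup_normal_cent pcharFp (normalSG sPG) pNP scS' biS'.
  by rewrite -setIA (setIidPr (cent_sub P)).
move=> Q sQG pQ; have [sQN | not_sQN] := boolP (Q \subset N).
  have sG_NCN := Frattini_cent_decomposition nsNG sylP sNPC sQN pQ.
  exact: brauer_quot_indec_in_kernel pcharFp sQN (normal_sub nsNG) fixNS pQ indS sG_NCN.
apply: quot_indec_or_zero_sub.
exact: scott_brauer_quot_outside_kernel modS modV defSV dxSV _ _ sPN nsNG fixNS sQG not_sQN.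
Qed.
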